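(* Let $\psi_1,\dots,\psi_N\in\mathbb{C}^{2^n}$ be unit vectors and $Y_1,\dots,Y_N\in\{-1,1\}$. Let $p\in[0,1/4)$ and let $C_1,\dots,C_N$ be i.i.d., independent of $(\psi_{1:N},Y_{1:N})$, with $\mathbb{P}\{C_i=0\}=1-3p$ and $\mathbb{P}\{C_i=j\}=p$ for $j=1,2,3$. Let $V_i=V_i^1\otimes\cdots\otimes V_i^n$ with $V_i^1=\sigma_{C_i}$ and $V_i^k$ ($k\ge2$) arbitrary (possibly random) $2\times 2$ unitaries, and set $\tilde\psi_i=V_i\psi_i$. Let $\ell:\mathbb{R}\to[0,\infty)$ be convex, monotonically nonincreasing, with $\ell(0)=1$. For a parametrized circuit $W(\theta)=W_1(\theta_1)\otimes\cdots\otimes W_n(\theta_n)$ ($\theta\in\mathbb{R}^k$, each $W_r(\theta_r)$ a $2\times2$ unitary) define $$m_\theta(\psi)=\langle\psi|W(\theta)^\dagger M_1W(\theta)|\psi\rangle-\tfrac12,\quad \hat R_N(\theta)=\frac1N\sum_{i=1}^N\ell\big(m_\theta(\psi_i)Y_i\big),\quad \tilde R_N(\theta)=\frac1N\sum_{i=1}^N\ell\big(m_\theta(\tilde\psi_i)Y_i\big),$$ and $\hat P_N(\theta)=\frac1N\sum_{i=1}^N\frac14\sum_{j=0}^{3}\ell\big(m_\theta((\sigma_j\otimes I_{2^{n-1}})\psi_i)\,Y_i\big)$. Then with $\lambda=\frac{4p}{1-4p}$, $$\mathbb{E}\big[\tilde R_N(\theta)\,\big|\,\psi_{1:N},Y_{1:N}\big]=(1-4p)\big[\hat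 R_N(\theta)+\lambda\,\hat P_N(\theta)\big],$$ and $$\hat P_N(\theta)\ \ge\ \frac1N\sum_{i=1}^N\frac{\ell\big(\tfrac13|m_\theta(\psi_i)|\big)+\ell\big(-\tfrac13|m_\theta(\psi_i)|\big)}{2}.$$
   Context: $\sigma_0=I_2$, $\sigma_1=\begin{pmatrix}0&1\\1&0\end{pmatrix}$, $\sigma_2=\begin{pmatrix}0&-i\\i&0\end{pmatrix}$, $\sigma_3=\begin{pmatrix}1&0\\0&-1\end{pmatrix}$ (Pauli matrices). $M_1=\begin{pmatrix}0&0\\0&1\end{pmatrix}\otimes I_{2^{n-1}}$, so $m_\theta(\psi)$ is the probability of measuring $|1\rangle$ on the first qubit of $W(\theta)\psi$, minus $1/2$. The conditional expectation is over $C_1,\dots,C_N$ (and any randomness in the $V_i^k$, $k\ge 2$). *)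

From HB Require Import structures.
From mathcomp Require Import all_boot all_order all_algebra.
From mathcomp Require Import all_classical all_reals all_analysis.
From mathcomp Require Import complex.
Set Implicit Arguments. Unset Strict Implicit. Unset Printing Implicit Defensive.
Import Order.TTheory GRing.Theory Num.Theory.
Local Open Scope ring_scope.
Local Open Scope complex_scope.

Section QDefs.
Variable R : realType.
Local Notation C := R[i].

Definition adjmx (m n : nat) (A : 'M[C]_(m, n)) : 'M[C]_(n, m) :=
  (map_mx (fun z : C => z^*) A)^T.

Definition qunitary (m : nat) (U : 'M[C]_m) : Prop := adjmx U *m U = 1%:M.

(* bit r (r = 0 is the FIRST qubit, i.e. the most significant bit) of an
   index x : 'I_(2^n) *)
Definition qbit {n : nat} (r : nat) (x : 'I_(2 ^ n)) : 'I_2 :=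
  inord ((x %/ 2 ^ (n - r.+1)) %% 2).

(* Kronecker product A 0 ⊗ A 1 ⊗ ... ⊗ A (n-1) of 2x2 matrices *)
Definition tens (n : nat) (A : nat -> 'M[C]_2) : 'M[C]_(2 ^ n) :=
  \matrix_(x < 2 ^ n, y < 2 ^ n) \prod_(r < n) A r (qbit r x) (qbit r y).

Definition pauli (j : 'I_4) : 'M[C]_2 :=
  match val j with
  | 0 => 1%:M
  | 1 => \matrix_(a, b) (if a == b then 0 else 1)
  | 2 => \matrix_(a, b) (if a == b then 0 else if val a == 0%N then - 'i else 'i)
  | _ => \matrix_(a, b) (if a == b then (if val a == 0%N then 1 else -1) else 0)
  end.

Definition proj1 : 'M[C]_2 := \matrix_(a, b) (if (val a == 1%N) && (val b == 1%N) then 1 else 0).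

Definition M1 (n : nat) : 'M[C]_(2 ^ n) := tens n (fun r => if r == 0%N then proj1 else 1%:M).

Definition first_qubit (n : nat) (B : 'M[C]_2) : 'M[C]_(2 ^ n) :=
  tens n (fun r => if r == 0%N then B else 1%:M).

Definition unit_vec (m : nat) (psi : 'cV[C]_m) : Prop := (adjmx psi *m psi) 0 0 = 1.

(* m_W(psi) = <psi| W^dag M_1 W |psi> - 1/2 (real-valued; we take the real
   part of the (real) quadratic form) *)
Definition mW (n : nat) (W : 'M[C]_(2 ^ n)) (psi : 'cV[C]_(2 ^ n)) : R :=
  complex.Re ((adjmx psi *m adjmx W *m M1 n *m W *m psi) 0 0) - 2^-1.

Definition convex_real_fun (l : R -> R) : Prop :=
  forall x y t : R, 0 <= t <= 1 -> l (t * x + (1 - t) * y) <= t * l x + (1 - t) * l y.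

Definition nonincr_real_fun (l : R -> R) : Prop := forall x y : R, x <= y -> l y <= l x.

End QDefs.

Section RiskDefs.
Variable R : realType.
Local Notation C := R[i].
Variables (n N : nat).

Definition Rhat (l : R -> R) (W : 'M[C]_(2 ^ n)) (psi : 'I_N -> 'cV[C]_(2 ^ n))
    (Y : 'I_N -> R) : R :=
  N%:R^-1 * \sum_(i < N) l (mW W (psi i) * Y i).

Definition Phat (l : R -> R) (W : 'M[C]_(2 ^ n)) (psi : 'I_N -> 'cV[C]_(2 ^ n))
    (Y : 'I_N -> R) : R :=
  N%:R^-1 * \sum_(i < N) (4^-1 * \sum_(j < 4)
      l (mW W (first_qubit n (@pauli R j) *m psi i) * Y i)).

(* the noise unitary V_i = sigma_{C_i} ⊗ V_i^2 ⊗ ... ⊗ V_i^n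
   (qubit r = 0 is the first qubit; Vk i r is V_i^{r+1}) *)
Definition noiseV (c : 'I_4) (Vk : nat -> 'M[C]_2) : 'M[C]_(2 ^ n) :=
  tens n (fun r => if r == 0%N then @pauli R c else Vk r).

Definition Rtilde (l : R -> R) (W : 'M[C]_(2 ^ n)) (psi : 'I_N -> 'cV[C]_(2 ^ n))
    (Y : 'I_N -> R) (c : 'I_N -> 'I_4) (Vk : 'I_N -> nat -> 'M[C]_2) : R :=
  N%:R^-1 * \sum_(i < N) l (mW W (noiseV (c i) (Vk i) *m psi i) * Y i).

End RiskDefs.

Definition mutually_independent_discrete (R : realType) (d : measure_display)
    (Omega : measurableType d) (P : probability Omega R) (N m : nat)
    (X : 'I_N -> Omega -> 'I_m) : Prop :=
  forall js : 'I_N -> 'I_m,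
    P [set w : Omega | forall i, X i w = js i]%classic
    = (\prod_(i < N) P [set w : Omega | X i w = js i]%classic)%E.

From HB Require Import structures.
From mathcomp Require Import all_boot all_order all_algebra.
From mathcomp Require Import all_classical all_reals all_analysis.
From mathcomp Require Import complex.
From mathcomp Require Import measurable_realfun.
From mathcomp Require Import ring lra.
Set Implicit Arguments. Unset Strict Implicit. Unset Printing Implicit Defensive.
Import Order.TTheory GRing.Theory Num.Theory.
Local Open Scope ring_scope.

(* Write the noise unitary as V = sigma_c (x) V^2 (x) ... (x) V^n
   and the circuit as W = W_1 (x) ... (x) W_n.  Then W^dag M_1 W acts only on
   the first qubit, so conjugating it by V cancels the unitaries V^k (k >= 2):
   the noisy margin m(V psi) only depends on the first-qubit Pauli sigma_c.
   Hence the expected noisy risk is a finite weighted sum over c in {0..3}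
   with weights 1-3p, p, p, p, which rearranges into
   (1-4p) [R_hat + lambda P_hat].
   For the lower bound, the Pauli twirl identity
   sum_j sigma_j^dag A sigma_j = 2 tr(A) I  shows that the four margins
   m(sigma_j psi) sum to 0 (tr of the rank-one projector is 1, psi is a unit
   vector).  Writing a = m(psi) Y, the other three arguments of the loss sum to
   -a, and two uses of convexity give
   l(|a|/3) + l(-|a|/3) <= (l a + l b1 + l b2 + l b3) / 2.
   The file develops: tensor products of 2x2 matrices, the Pauli twirl, the
   two facts about margins, the expectation of functions of discrete random
   variables, the convexity inequality, and finally the theorem. *)

Section TensorProducts.
Variable R : realType.
Local Notation C := R[i].

Lemma qbitE n r (x : 'I_(2 ^ n)) : qbit r x = ((x %/ 2 ^ (n - r.+1)) %% 2)%N :> nat.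
Proof. by rewrite /qbit inordK // ltn_pmod. Qed.

Lemma qbit_inj n (x y : 'I_(2 ^ n)) :
  (forall r : 'I_n, qbit r x = qbit r y) -> x = y.
Proof.
move=> Hbit.
have digit_eq e : (e < n)%N -> ((x %/ 2 ^ e) %% 2 = (y %/ 2 ^ e) %% 2)%N.
  move=> he; have hr : (n - e.+1 < n)%N by rewrite ltn_subrL (leq_ltn_trans _ he).
  have := congr1 (@nat_of_ord 2) (Hbit (Ordinal hr)); rewrite !qbitE /=.
  by rewrite subnSK // subKn // ltnW.
have high_eq m : (m <= n)%N -> (x %/ 2 ^ (n - m) = y %/ 2 ^ (n - m))%N.
  elim: m => [|m IH] hm; first by rewrite subn0 !divn_small.
  have digit_lt : (n - m.+1 < n)%N by rewrite ltn_subrL (leq_ltn_trans _ hm).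
  rewrite (divn_eq (x %/ 2 ^ (n - m.+1)) 2) (divn_eq (y %/ 2 ^ (n - m.+1)) 2).
  by rewrite -!divnMA -expnSr subnSK // IH ?(ltnW hm) // digit_eq.
by apply/val_inj; have := high_eq n (leqnn n); rewrite subnn expn0 !divn1.
Qed.

Definition qvec n (x : 'I_(2 ^ n)) : {ffun 'I_n -> 'I_2} := [ffun r : 'I_n => qbit r x].

Lemma qvec_bij n : bijective (@qvec n).
Proof.
apply: inj_card_bij; last by rewrite card_ffun !card_ord.
by move=> x y /ffunP H; apply: qbit_inj => r; have := H r; rewrite !ffunE.
Qed.

Lemma tensM n (A B : nat -> 'M[C]_2) :
  tens n A *m tens n B = tens n (fun r => A r *m B r).
Proof.
apply/matrixP => x y; rewrite !mxE.
under eq_bigr do rewrite !mxE.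
under [RHS]eq_bigr do rewrite mxE.
rewrite bigA_distr_bigA /= (reindex (@qvec n)); last exact/onW_bij/qvec_bij.
by apply: eq_bigr => z _; rewrite -big_split; apply: eq_bigr => r _; rewrite ffunE.
Qed.

Lemma adjE m n (A : 'M[C]_(m, n)) i j : adjmx A i j = (A j i)^*%C.
Proof. by rewrite /adjmx !mxE. Qed.

Lemma adjM m n q (A : 'M[C]_(m, n)) (B : 'M[C]_(n, q)) :
  adjmx (A *m B) = adjmx B *m adjmx A.
Proof. by rewrite /adjmx map_mxM trmx_mul. Qed.

Lemma adjZ m n (a : C) (A : 'M[C]_(m, n)) : adjmx (a *: A) = (a^*)%C *: adjmx A.
Proof. by apply/matrixP => i j; rewrite !mxE rmorphM. Qed.

Lemma adj1 m : adjmx (1%:M : 'M[C]_m) = 1%:M.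
Proof. by apply/matrixP => i j; rewrite adjE !mxE rmorph_nat eq_sym. Qed.

Lemma tens_adj n (A : nat -> 'M[C]_2) :
  adjmx (tens n A) = tens n (fun r => adjmx (A r)).
Proof.
apply/matrixP => x y; rewrite adjE !mxE rmorph_prod.
by apply: eq_bigr => r _; rewrite adjE.
Qed.

Lemma tens_ext n (A B : nat -> 'M[C]_2) :
  (forall r, (r < n)%N -> A r = B r) -> tens n A = tens n B.
Proof. by move=> H; apply/matrixP => x y; rewrite !mxE; apply: eq_bigr => r _; rewrite H. Qed.

Lemma tens1 n : tens n (fun _ => 1%:M) = 1%:M :> 'M[C]_(2 ^ n).
Proof.
apply/matrixP => x y; rewrite !mxE.
have [->|nxy] := eqVneq x y; first by apply: big1 => r _; rewrite mxE eqxx.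
have [r hr] : exists r : 'I_n, qbit r x != qbit r y.
  apply/existsP; apply: contraR nxy => /existsPn H.
  by apply/eqP/qbit_inj => r; apply/eqP; have := H r; rewrite negbK.
by rewrite (bigD1 r) //= mxE (negbTE hr) mul0r.
Qed.

Lemma tens_first_sum n (B : 'I_4 -> 'M[C]_2) (D : nat -> 'M[C]_2) : (0 < n)%N ->
  tens n (fun r => if r == 0%N then \sum_j B j else D r)
  = \sum_j tens n (fun r => if r == 0%N then B j else D r).
Proof.
case: n => // n _; apply/matrixP => x y.
rewrite summxE !mxE big_ord_recl /= summxE big_distrl /=.
by apply: eq_bigr => j _; rewrite mxE big_ord_recl.
Qed.

Lemma tens_first_scale n (c : C) (A : 'M[C]_2) (D : nat -> 'M[C]_2) : (0 < n)%N ->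
  tens n (fun r => if r == 0%N then c *: A else D r)
  = c *: tens n (fun r => if r == 0%N then A else D r).
Proof.
case: n => // n _; apply/matrixP => x y.
by rewrite !mxE big_ord_recl /= mxE big_ord_recl -mulrA.
Qed.

Lemma first_qubit1 n : first_qubit n (1%:M : 'M[C]_2) = 1%:M.
Proof. by rewrite /first_qubit (@tens_ext n _ (fun _ => 1%:M)) ?tens1 // => r _; case: ifP. Qed.

End TensorProducts.

Section PauliTwirl.
Variable R : realType.
Local Notation C := R[i].

Definition sigma_x : 'M[C]_2 := \matrix_(a, b) (if a == b then 0 else 1).
Definition sigma_z : 'M[C]_2 :=
  \matrix_(a, b) (if a == b then (if val a == 0%N then 1 else -1) else 0).

Lemma adj_sigma_x : adjmx sigma_x = sigma_x.
Proof.
apply/matrixP => i j; rewrite adjE !mxE eq_sym.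
by case: (i == j); rewrite ?rmorph0 ?rmorph1.
Qed.

Lemma adj_sigma_z : adjmx sigma_z = sigma_z.
Proof.
apply/matrixP => i j; rewrite adjE !mxE; have [->|_] := eqVneq j i; last by rewrite rmorph0.
by case: ifP; rewrite ?rmorph1 ?rmorphN1.
Qed.

(* sigma_y = i sigma_x sigma_z, so every Pauli is built from sigma_x, sigma_z. *)
Lemma sigma_yE : pauli R (2%:R : 'I_4) = 'i%C *: (sigma_x *m sigma_z).
Proof.
apply/matrixP => a b; rewrite /pauli /= !mxE !big_ord_recl big_ord0 !mxE.
case: a => [[|[|?]] ?] //; case: b => [[|[|?]] ?] //=.
all: by rewrite ?(mul0r, mulr0, mul1r, mulr1, add0r, addr0, mulrN1).
Qed.

Lemma pauli_twirl (A : 'M[C]_2) :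
  \sum_(j < 4) adjmx (pauli R j) *m A *m pauli R j = (2 * \tr A) *: 1%:M.
Proof.
have ii : ('i%C)^*%C * 'i%C = 1 :> C.
  by apply/eqP; rewrite eq_complex /=; apply/andP; split; apply/eqP; ring.
rewrite !big_ord_recl big_ord0 addr0 /=.
have -> : (lift ord0 (lift ord0 ord0) : 'I_4) = 2%:R by apply/val_inj.
rewrite sigma_yE adjZ -!scalemxAl -scalemxAr scalerA ii scale1r /pauli /=.
rewrite -/sigma_x -/sigma_z adj1 adj_sigma_x adj_sigma_z adjM adj_sigma_x adj_sigma_z.
apply/matrixP => a b; rewrite /sigma_x /sigma_z /mxtrace.
rewrite !(adjE, mxE, big_ord_recl, big_ord0).
by case: a => [[|[|?]] ?] //; case: b => [[|[|?]] ?] //=; ring.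
Qed.

End PauliTwirl.

Section Margins.
Variable R : realType.
Local Notation C := R[i].

Definition quad m (phi : 'cV[C]_m) (X : 'M[C]_m) : C := (adjmx phi *m X *m phi) 0 0.

Lemma mWE n (W : 'M[C]_(2 ^ n)) phi :
  mW W phi = complex.Re (quad phi (adjmx W *m M1 R n *m W)) - 2^-1.
Proof. by rewrite /mW /quad !mulmxA. Qed.

Lemma quadM m (F : 'M[C]_m) phi X : quad (F *m phi) X = quad phi (adjmx F *m X *m F).
Proof. by rewrite /quad adjM !mulmxA. Qed.

Lemma quad_scale1 m (phi : 'cV[C]_m) (c : C) :
  quad phi (c *: 1%:M) = c * (adjmx phi *m phi) 0 0.
Proof. by rewrite /quad scalemx1 mul_mx_scalar -scalemxAl mxE. Qed.

Lemma quad_sum m (phi : 'cV[C]_m) (X : 'I_4 -> 'M[C]_m) :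
  quad phi (\sum_j X j) = \sum_j quad phi (X j).
Proof. by rewrite /quad mulmx_sumr mulmx_suml summxE. Qed.

Lemma Re_add (x y : C) : complex.Re (x + y) = complex.Re x + complex.Re y.
Proof. by case: x; case: y. Qed.

Lemma conj_first_qubit n (S Q : 'M[C]_2) (V : nat -> 'M[C]_2) :
  (forall r, (0 < r < n)%N -> qunitary (V r)) ->
  adjmx (tens n (fun r => if r == 0%N then S else V r))
    *m first_qubit n Q *m tens n (fun r => if r == 0%N then S else V r)
  = first_qubit n (adjmx S *m Q *m S).
Proof.
move=> hV; rewrite tens_adj !tensM; apply: tens_ext => -[|r] hr //=.
by rewrite mulmx1; apply: hV.
Qed.

Lemma circuit_observable n (Wr : nat -> 'M[C]_2) :
  (forall r, (r < n)%N -> qunitary (Wr r)) ->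
  adjmx (tens n Wr) *m M1 R n *m tens n Wr
  = first_qubit n (adjmx (Wr 0%N) *m proj1 R *m Wr 0%N).
Proof.
move=> hW; rewrite /M1 tens_adj !tensM; apply: tens_ext => -[|r] hr //=.
by rewrite mulmx1; apply: hW.
Qed.

Lemma margin_noise n (Wr : nat -> 'M[C]_2) c (V : nat -> 'M[C]_2) phi :
  (forall r, (r < n)%N -> qunitary (Wr r)) ->
  (forall r, (0 < r < n)%N -> qunitary (V r)) ->
  mW (tens n Wr) (noiseV n c V *m phi) = mW (tens n Wr) (first_qubit n (pauli R c) *m phi).
Proof.
move=> hW hV; rewrite !mWE !quadM circuit_observable // conj_first_qubit //.
by rewrite (@conj_first_qubit n _ _ (fun _ => 1%:M)) // => r _; rewrite /qunitary adj1 mul1mx.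
Qed.

Lemma trace_conj_proj1 (U : 'M[C]_2) : qunitary U -> \tr (adjmx U *m proj1 R *m U) = 1.
Proof.
move=> hU; rewrite mxtrace_mulC mulmxA (mulmx1C hU) mul1mx.
by rewrite /mxtrace !big_ord_recl big_ord0 !mxE /= add0r addr0.
Qed.

Lemma margin_twirl_sum n (Wr : nat -> 'M[C]_2) phi : (0 < n)%N ->
  (forall r, (r < n)%N -> qunitary (Wr r)) -> unit_vec phi ->
  \sum_(j < 4) mW (tens n Wr) (first_qubit n (pauli R j) *m phi) = 0.
Proof.
move=> hn hW hphi; set Q0 := adjmx (Wr 0%N) *m proj1 R *m Wr 0%N.
have conj_pauli j : mW (tens n Wr) (first_qubit n (pauli R j) *m phi)
    = complex.Re (quad phi (first_qubit n (adjmx (pauli R j) *m Q0 *m pauli R j))) - 2^-1.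
  rewrite mWE quadM circuit_observable // /first_qubit conj_first_qubit //.
  by move=> r _; rewrite /qunitary adj1 mul1mx.
under eq_bigr do rewrite conj_pauli.
rewrite big_split /= sumr_const card_ord.
rewrite -(big_morph _ Re_add (erefl (complex.Re 0))) -quad_sum -tens_first_sum //.
rewrite pauli_twirl tens_first_scale // -/(first_qubit n 1%:M) first_qubit1.
rewrite quad_scale1 hphi trace_conj_proj1; last exact: hW.
by rewrite !mulr1 -(rmorph_nat (real_complex R) 2) /= -mulr_natr; lra.
Qed.

End Margins.

(* Expectation of a sum of nonnegative functions of discrete random variables
   with values in {0..3}: only the marginal laws matter. *)
Lemma expectation_sum_discrete (R : realType) (d : measure_display)
  (Omega : measurableType d) (P : probability Omega R) (N : nat)
  (X : 'I_N -> Omega -> 'I_4) (g : 'I_N -> 'I_4 -> R) (q : 'I_4 -> R) :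
  (forall i j, 0 <= g i j) ->
  (forall i (j : 'I_4), measurable [set w : Omega | X i w = j]%classic) ->
  (forall i (j : 'I_4), P [set w : Omega | X i w = j]%classic = (q j)%:E) ->
  (\int[P]_w (\sum_(i < N) g i (X i w))%:E
   = (\sum_(i < N) \sum_(j < 4) g i j * q j)%:E)%E.
Proof.
move=> g0 mX PX.
pose ind i j := \1_([set w | X i w = j]%classic) : Omega -> R.
have decompose w : (\sum_(i < N) g i (X i w))%:E
    = (\sum_(i < N) \sum_(j < 4) (g i j)%:E * (ind i j w)%:E)%E.
  rewrite (eq_bigr (fun i => (\sum_(j < 4) g i j * ind i j w)%:E)); last first.
    by move=> i _; rewrite -sumEFin; apply: eq_bigr => j _; rewrite EFinM.
  rewrite sumEFin; congr EFin; apply: eq_bigr => i _.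
  rewrite /ind (bigD1 (X i w)) //= indicE mem_set // mulr1 big1 ?addr0 //.
  by move=> j hj; rewrite indicE memNset ?mulr0 // => Ej; rewrite Ej eqxx in hj.
under eq_integral do rewrite decompose.
have term_ge0 i j w : (0 <= (g i j)%:E * (ind i j w)%:E)%E.
  by apply: mule_ge0; rewrite lee_fin ?indic_ge0.
have term_mfun i j : measurable_fun setT (fun w => ((g i j)%:E * (ind i j w)%:E)%E).
  by apply/measurable_EFinP/measurable_funM; [exact: measurable_cst | exact: measurable_indic].
rewrite ge0_integral_sum //; last first.
- by move=> i w _; apply: sume_ge0.
- by move=> i; apply: emeasurable_sum => j; exact: term_mfun.
rewrite -sumEFin; apply: eq_bigr => i _.
rewrite ge0_integral_sum // -sumEFin; apply: eq_bigr => j _.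
rewrite /ind ge0_integralZl_EFin //; last exact/measurable_EFinP/measurable_indic.
by rewrite integral_indic // setIT EFinM -(PX i j).
Qed.

Lemma noise_weights (R : realType) (p : R) (a : 'I_4 -> R) : 1 - 4 * p != 0 ->
  \sum_(j < 4) a j * (if val j == 0%N then 1 - 3 * p else p)
  = (1 - 4 * p) * (a ord0 + 4 * p / (1 - 4 * p) * (4^-1 * \sum_(j < 4) a j)).
Proof. by move=> hp; rewrite !big_ord_recl !big_ord0 /=; field. Qed.

Section Convexity.
Variable R : realType.
Variable l : R -> R.
Hypothesis l_convex : convex_real_fun l.

Lemma convex_mid x y : l ((x + y) / 2) <= (l x + l y) / 2.
Proof.
have := @l_convex x y (2^-1); rewrite invr_ge0 invf_le1 ?ler1n //= ler0n => /(_ isT).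
have -> : 2^-1 * x + (1 - 2^-1) * y = (x + y) / 2 by field.
by have -> : 2^-1 * l x + (1 - 2^-1) * l y = (l x + l y) / 2 by field.
Qed.

Lemma convex_three x y z : l ((x + y + z) / 3) <= (l x + l y + l z) / 3.
Proof.
have := @l_convex x ((y + z) / 2) (3^-1).
rewrite invr_ge0 invf_le1 ?ler1n //= ler0n => /(_ isT).
have -> : 3^-1 * x + (1 - 3^-1) * ((y + z) / 2) = (x + y + z) / 3 by field.
move=> /le_trans; apply.
have -> : (l x + l y + l z) / 3 = 3^-1 * l x + (1 - 3^-1) * ((l y + l z) / 2) by field.
by rewrite lerD2l ler_wpM2l ?convex_mid // subr_ge0 invf_le1 ?ler1n.
Qed.

(* If b1 + b2 + b3 = -a, the average of l over a, b1, b2, b3 dominates the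
   symmetrized loss at |a|/3: l(-a/3) <= avg l(b_k) and l(a/3) <= avg of
   l(a), l(-a/3). *)
Lemma convex_twirl_bound (a b1 b2 b3 : R) : b1 + b2 + b3 = - a ->
  (l (3^-1 * `|a|) + l (- (3^-1 * `|a|))) / 2 <= 4^-1 * (l a + l b1 + l b2 + l b3).
Proof.
move=> hs; have h3 := convex_three b1 b2 b3; rewrite hs in h3.
have hm := convex_mid a (- a / 3).
rewrite (_ : (a + - a / 3) / 2 = a / 3) in hm; last by field.
have -> : l (3^-1 * `|a|) + l (- (3^-1 * `|a|)) = l (a / 3) + l (- a / 3).
  have [ha|ha] := lerP 0 a; first by rewrite ger0_norm // mulrC mulNr.
  by rewrite ltr0_norm // mulrN opprK addrC mulrC mulNr.
lra.
Qed.

End Convexity.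

Theorem theorem3 (R : realType) (n N k : nat)
  (d : measure_display) (Omega : measurableType d) (P : probability Omega R)
  (psi : 'I_N -> 'cV[R[i]]_(2 ^ n)) (Y : 'I_N -> R) (p : R)
  (Cr : 'I_N -> Omega -> 'I_4) (Vk : 'I_N -> nat -> Omega -> 'M[R[i]]_2)
  (l : R -> R) (Wp : nat -> 'rV[R]_k -> 'M[R[i]]_2) (theta : 'rV[R]_k) :
  (0 < n)%N -> (0 < N)%N ->
  (forall i, unit_vec (psi i)) ->
  (forall i, Y i = 1 \/ Y i = -1) ->
  0 <= p -> p < 4^-1 ->
  (forall i (j : 'I_4), measurable [set w : Omega | Cr i w = j]%classic) ->
  (forall i (j : 'I_4), P [set w : Omega | Cr i w = j]%classic
                        = (if val j == 0%N then 1 - 3 * p else p)%:E) ->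
  mutually_independent_discrete P Cr ->
  (forall i r w, (0 < r < n)%N -> qunitary (Vk i r w)) ->
  (forall r th, (r < n)%N -> qunitary (Wp r th)) ->
  convex_real_fun l -> nonincr_real_fun l -> (forall x, 0 <= l x) -> l 0 = 1 ->
  let W := tens n (fun r => Wp r theta) in
  let lam := 4 * p / (1 - 4 * p) in
  (\int[P]_w (Rtilde l W psi Y (fun i => Cr i w) (fun i r => Vk i r w))%:E
     = ((1 - 4 * p) * (Rhat l W psi Y + lam * Phat l W psi Y))%:E)%E
  /\
  Phat l W psi Y >=
    N%:R^-1 * \sum_(i < N)
      ((l (3^-1 * `|mW W (psi i)|) + l (- (3^-1 * `|mW W (psi i)|))) / 2).
Proof.
move=> n_gt0 _ psi_unit hY p_ge0 p_lt mCr PCr _ hV hW l_convex _ l_ge0 _ W lam.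
have hWu r : (r < n)%N -> qunitary (Wp r theta) by apply: hW.
have psi_first i : psi i = first_qubit n (pauli R ord0) *m psi i.
  by rewrite /pauli /= first_qubit1 mul1mx.
pose g i j := N%:R^-1 * l (mW W (first_qubit n (pauli R j) *m psi i) * Y i).
split.
- have noisy_risk w : Rtilde l W psi Y (Cr^~ w) (fun i r => Vk i r w) = \sum_i g i (Cr i w).
    rewrite /Rtilde mulr_sumr; apply: eq_bigr => i _.
    by rewrite /g (@margin_noise R n _ _ _ _ hWu (fun r => hV i r w)).
  under eq_integral do rewrite noisy_risk.
  have g_ge0 i j : 0 <= g i j by rewrite mulr_ge0.
  rewrite (expectation_sum_discrete g_ge0 mCr PCr).
  have hp : 1 - 4 * p != 0 by apply/eqP; move: p_lt; rewrite -(ltr_pM2l (x := 4)) //; lra.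
  congr EFin; rewrite /Rhat /Phat !mulr_sumr -big_split mulr_sumr; apply: eq_bigr => i _.
  rewrite noise_weights // /g /lam -psi_first -mulr_sumr; congr (_ * (_ + _)); ring.
- rewrite /Phat ler_wpM2l ?invr_ge0 ?ler0n //; apply: ler_sum => i _.
  have hs := margin_twirl_sum n_gt0 hWu (psi_unit i).
  rewrite !big_ord_recl !big_ord0 /= -psi_first !addr0 in hs *.
  have -> : `|mW W (psi i)| = `|mW W (psi i) * Y i|.
    by case: (hY i) => ->; rewrite ?mulrN mulr1 ?normrN.
  rewrite !addrA; apply: (convex_twirl_bound l_convex).
  by rewrite -!mulrDl -mulNr; congr (_ * _); lra.
Qed.
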